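(* Let $\mathbb{A}$ be the field of real algebraic numbers. $T[\mathbb{R}]$ is a conservative extension of $T[\mathbb{A}]$: every sentence in the language of $T[\mathbb{A}]$ that is provable in $T[\mathbb{R}]$ is provable in $T[\mathbb{A}]$.
   Context: For a subfield $F$ of $\mathbb{R}$ and $a\in F$, $f_a$ is a unary function symbol interpreted as $f_a(x)=ax$. $T_{\mathrm{add}}[F]$ is the set of sentences true in $(\mathbb{R},0,1,+,-,<,(f_a)_{a\in F})$, $T_{\mathrm{mult}}[F]$ the set of sentences true in $(\mathbb{R},0,1,\times,\div,<,(f_a)_{a\in F})$ with $x\div0=0$, and $T[F]=T_{\mathrm{add}}[F]\cup T_{\mathrm{mult}}[F]$, a theory in the union of the two languages. *)

From Stdlib Require Import Reals ZArith List.
Open Scope R_scope.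

(** * First-order syntax for the combined language
    {0, 1, +, -, ×, ÷, <, =} ∪ {f_a : a ∈ R}; sublanguages are carved out by
    predicates below. Variables are named by natural numbers. *)

Inductive term : Type :=
| tvar  : nat -> term
| tzero : term
| tone  : term
| tadd  : term -> term -> term
| tsub  : term -> term -> term
| tmul  : term -> term -> term
| tdiv  : term -> term -> term
| tscal : R -> term -> term.

Inductive formula : Type :=
| feq  : term -> term -> formula
| flt  : term -> term -> formula
| fbot : formula
| fimp : formula -> formula -> formula
| fand : formula -> formula -> formula
| for_ : formula -> formula -> formula
| fall : nat -> formula -> formula
| fex  : nat -> formula -> formula.

Fixpoint occurs_t (x : nat) (t : term) : Prop :=
  match t with
  | tvar y => x = y
  | tzero | tone => False
  | tadd u v | tsub u v | tmul u v | tdiv u v => occurs_t x u \/ occurs_t x v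
  | tscal _ u => occurs_t x u
  end.

Fixpoint occurs_free (x : nat) (p : formula) : Prop :=
  match p with
  | feq u v | flt u v => occurs_t x u \/ occurs_t x v
  | fbot => False
  | fimp p q | fand p q | for_ p q => occurs_free x p \/ occurs_free x q
  | fall y p | fex y p => x <> y /\ occurs_free x p
  end.

Definition sentence (p : formula) : Prop := forall x, ~ occurs_free x p.

(** Language membership.  [F] is the set of allowed scalars a (for f_a);
    [ad] allows 0,1,+,- ; [mu] allows 0,1,×,÷ (0 and 1 are always allowed). *)
Fixpoint term_in (F : R -> Prop) (ad mu : bool) (t : term) : Prop :=
  match t with
  | tvar _ | tzero | tone => True
  | tadd u v | tsub u v => ad = true /\ term_in F ad mu u /\ term_in F ad mu v
  | tmul u v | tdiv u v => mu = true /\ term_in F ad mu u /\ term_in F ad mu v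
  | tscal a u => F a /\ term_in F ad mu u
  end.

Fixpoint formula_in (F : R -> Prop) (ad mu : bool) (p : formula) : Prop :=
  match p with
  | feq u v | flt u v => term_in F ad mu u /\ term_in F ad mu v
  | fbot => True
  | fimp p q | fand p q | for_ p q => formula_in F ad mu p /\ formula_in F ad mu q
  | fall _ p | fex _ p => formula_in F ad mu p
  end.

Definition L_add  (F : R -> Prop) := formula_in F true false.
Definition L_mult (F : R -> Prop) := formula_in F false true.
Definition L_full (F : R -> Prop) := formula_in F true true.

(** * Structures (equality is interpreted as true equality). *)
Record structure : Type := Structure {
  carrier : Type;
  s_zero : carrier;
  s_one  : carrier;
  s_add  : carrier -> carrier -> carrier;
  s_sub  : carrier -> carrier -> carrier;
  s_mul  : carrier -> carrier -> carrier;
  s_div  : carrier -> carrier -> carrier;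
  s_scal : R -> carrier -> carrier;
  s_lt   : carrier -> carrier -> Prop }.

Fixpoint eval_t (M : structure) (e : nat -> carrier M) (t : term) : carrier M :=
  match t with
  | tvar x => e x
  | tzero => s_zero M
  | tone => s_one M
  | tadd u v => s_add M (eval_t M e u) (eval_t M e v)
  | tsub u v => s_sub M (eval_t M e u) (eval_t M e v)
  | tmul u v => s_mul M (eval_t M e u) (eval_t M e v)
  | tdiv u v => s_div M (eval_t M e u) (eval_t M e v)
  | tscal a u => s_scal M a (eval_t M e u)
  end.

Definition upd {A : Type} (e : nat -> A) (x : nat) (v : A) : nat -> A :=
  fun y => if Nat.eqb y x then v else e y.

Fixpoint holds (M : structure) (e : nat -> carrier M) (p : formula) : Prop :=
  match p with
  | feq u v => eval_t M e u = eval_t M e v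
  | flt u v => s_lt M (eval_t M e u) (eval_t M e v)
  | fbot => False
  | fimp p q => holds M e p -> holds M e q
  | fand p q => holds M e p /\ holds M e q
  | for_ p q => holds M e p \/ holds M e q
  | fall x p => forall v : carrier M, holds M (upd e x v) p
  | fex x p => exists v : carrier M, holds M (upd e x v) p
  end.

Definition sat (M : structure) (p : formula) : Prop :=
  forall e : nat -> carrier M, holds M e p.

(** * The standard real structure:  x ÷ 0 = 0,  f_a(x) = a x. *)
Definition rdiv0 (x y : R) : R := if Req_EM_T y 0 then 0 else x / y.

Definition Rstructure : structure :=
  Structure R 0 1 Rplus Rminus Rmult rdiv0 (fun a x => a * x) Rlt.

Definition T_add (F : R -> Prop) (p : formula) : Prop :=
  sentence p /\ L_add F p /\ sat Rstructure p.
Definition T_mult (F : R -> Prop) (p : formula) : Prop :=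
  sentence p /\ L_mult F p /\ sat Rstructure p.
Definition T (F : R -> Prop) (p : formula) : Prop := T_add F p \/ T_mult F p.

(** Provability, via Gödel completeness, as semantic consequence. *)
Definition entails (Th : formula -> Prop) (p : formula) : Prop :=
  forall M : structure, (forall q, Th q -> sat M q) -> sat M p.

Fixpoint zpoly_eval (cs : list Z) (x : R) : R :=
  match cs with
  | nil => 0
  | c :: cs' => IZR c + x * zpoly_eval cs' x
  end.

Definition real_algebraic (x : R) : Prop :=
  exists cs : list Z, (exists c, In c cs /\ c <> 0%Z) /\ zpoly_eval cs x = 0.

Definition all_reals : R -> Prop := fun _ => True.

(* Let M be a model of T[A].  For every map g : R -> A fixing A, let M_g be M with f_r
   interpreted as f_(g r).  If g keeps a sentence q of T[R] true once each parameter r of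
   q is replaced by g r, then M_g satisfies q.  Finitely many sentences of T[R] are kept
   true by a common g, so some ultrafilter on the maps g contains, for each finite set of
   sentences of T[R], the maps keeping them true; by Łoś's theorem the ultraproduct of the
   M_g is then a model of T[R].  Hence it satisfies p, so does some M_g, and M_g agrees
   with M on p because p only has algebraic parameters.
   The common g exists because A is an elementary substructure of R: the transcendental
   parameters of the finitely many sentences are turned into variables and replaced, one
   at a time, by algebraic numbers.  After quantifier elimination, which only introduces
   rational constants, one is left with a quantifier-free formula in one variable with
   algebraic parameters.  A polynomial with algebraic coefficients that vanishes at a
   transcendental point is zero, so at such a point the signs of all these polynomials
   are locally constant: the formula holds on a neighbourhood, which contains algebraic
   points. *)

From Pilot Require Import Defs.
From mathcomp Require Import all_boot all_order all_algebra.
From mathcomp Require Import polyrcf qe_rcf_th ordered_qelim qe_rcf.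
From mathcomp Require Import boolp classical_sets filter Rstruct lra ssrZ.

Set Implicit Arguments.
Unset Strict Implicit.
Unset Printing Implicit Defensive.

Import Order.TTheory GRing.Theory Num.Theory.
Local Open Scope ring_scope.

Local Notation RR := Rdefinitions.R.

Lemma upd_ext A (e e' : nat -> A) x v (Q : nat -> Prop) :
  (forall y, y <> x /\ Q y -> e y = e' y) -> forall y, Q y -> upd e x v y = upd e' x v y.
Proof. by move=> He y Hy; rewrite /upd; case: PeanoNat.Nat.eqb_spec => // yx; apply: He. Qed.

Section Semantics.
Variable M : structure.

Lemma eval_t_ext (e e' : nat -> carrier M) t :
  (forall x, occurs_t x t -> e x = e' x) -> eval_t M e t = eval_t M e' t.
Proof.
elim: t => //= [x He|u IHu v IHv He|u IHu v IHv He|u IHu v IHv He|u IHu v IHv He|a u IHu He];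
  first exact: He; last by rewrite IHu.
all: by rewrite IHu ?IHv // => x Hx; apply: He; [right|left].
Qed.

Lemma holds_ext p (e e' : nat -> carrier M) :
  (forall x, occurs_free x p -> e x = e' x) -> (holds M e p <-> holds M e' p).
Proof.
elim: p e e' => /= [u v|u v||p IHp q IHq|p IHp q IHq|p IHp q IHq|x p IHp|x p IHp] e e' He.
1,2: by rewrite !(@eval_t_ext e e') // => y Hy; apply: He; [right|left].
- by [].
1-3: by rewrite (IHp e e') ?(IHq e e') // => y Hy; apply: He; [right|left].
- by split=> H v; apply/(IHp _ _ (upd_ext v He)); apply: H.
- by split=> -[v H]; exists v; apply/(IHp _ _ (upd_ext v He)).
Qed.

Lemma sentence_holds p (e e' : nat -> carrier M) :
  sentence p -> holds M e p -> holds M e' p.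
Proof. by move=> Hp; apply: (iffLR (holds_ext _)) => x /Hp. Qed.

End Semantics.

Fixpoint tmap_scal (g : RR -> RR) (t : Defs.term) : Defs.term :=
  match t with
  | tvar n => tvar n
  | tzero => tzero
  | tone => tone
  | tadd u v => tadd (tmap_scal g u) (tmap_scal g v)
  | tsub u v => tsub (tmap_scal g u) (tmap_scal g v)
  | tmul u v => tmul (tmap_scal g u) (tmap_scal g v)
  | tdiv u v => tdiv (tmap_scal g u) (tmap_scal g v)
  | tscal a u => tscal (g a) (tmap_scal g u)
  end.

Fixpoint fmap_scal (g : RR -> RR) (p : Defs.formula) : Defs.formula :=
  match p with
  | feq u v => feq (tmap_scal g u) (tmap_scal g v)
  | flt u v => flt (tmap_scal g u) (tmap_scal g v)
  | fbot => fbot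
  | fimp p q => fimp (fmap_scal g p) (fmap_scal g q)
  | fand p q => fand (fmap_scal g p) (fmap_scal g q)
  | for_ p q => for_ (fmap_scal g p) (fmap_scal g q)
  | fall x p => fall x (fmap_scal g p)
  | fex x p => fex x (fmap_scal g p)
  end.

Definition reindex_scal (M : structure) (g : RR -> RR) : structure :=
  Structure (carrier M) (s_zero M) (s_one M) (s_add M) (s_sub M) (s_mul M) (s_div M)
    (fun a x => s_scal M (g a) x) (s_lt M).

Section ReindexScalars.
Variable g : RR -> RR.

Lemma eval_t_reindex M e t :
  eval_t (reindex_scal M g) e t = eval_t M e (tmap_scal g t).
Proof. by elim: t => //= *; congruence. Qed.

Lemma holds_reindex M p e :
  holds (reindex_scal M g) e p <-> holds M e (fmap_scal g p).
Proof.
elim: p e => /= [u v|u v||p IHp q IHq|p IHp q IHq|p IHp q IHq|x p IHp|x p IHp] e;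
  rewrite ?eval_t_reindex //; try by rewrite IHp IHq.
- by split=> H v; apply/IHp.
- by split=> -[v /IHp H]; exists v.
Qed.

Lemma occurs_t_tmap_scal x t : occurs_t x (tmap_scal g t) <-> occurs_t x t.
Proof. by elim: t => //= *; tauto. Qed.

Lemma occurs_free_fmap_scal x p : occurs_free x (fmap_scal g p) <-> occurs_free x p.
Proof. by elim: p => //= *; rewrite ?occurs_t_tmap_scal; tauto. Qed.

Lemma sentence_fmap_scal p : sentence p -> sentence (fmap_scal g p).
Proof. by move=> Hp x /occurs_free_fmap_scal; apply: Hp. Qed.

Lemma formula_in_fmap_scal (F F' : RR -> Prop) ad mu p :
  (forall a, F a -> F' (g a)) -> formula_in F ad mu p -> formula_in F' ad mu (fmap_scal g p).
Proof.
move=> Hg; have Ht t : term_in F ad mu t -> term_in F' ad mu (tmap_scal g t).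
  by elim: t => //= *; intuition.
by elim: p => //= *; intuition.
Qed.

Lemma fmap_scal_id_in (F : RR -> Prop) ad mu p :
  (forall a, F a -> g a = a) -> formula_in F ad mu p -> fmap_scal g p = p.
Proof.
move=> Hg; have Ht t : term_in F ad mu t -> tmap_scal g t = t.
  elim: t => //= [u IHu v IHv|u IHu v IHv|u IHu v IHv|u IHu v IHv|a u IHu];
  by [move=> [_ [/IHu -> /IHv ->]] | move=> [/Hg -> /IHu ->]].
elim: p => //= [u v|u v|p IHp q IHq|p IHp q IHq|p IHp q IHq|x p IHp|x p IHp];
  by [move=> [/Ht -> /Ht ->] | move=> [/IHp -> /IHq ->] | move=> /IHp ->].
Qed.

End ReindexScalars.

(** * Łoś's theorem *)

Section Ultraproduct.
Variables (I : Type) (U : set_system I) (Ms : I -> structure).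
Hypothesis U_ultra : UltraFilter U.

Local Notation prod := (forall i, carrier (Ms i)).

Lemma ultra_and (A B : I -> Prop) : U (fun i => A i /\ B i) <-> U A /\ U B.
Proof.
split=> [H|[HA HB]]; last exact: filterI.
by split; apply: filterS H => i [].
Qed.

Lemma ultra_not (A : I -> Prop) : U (fun i => ~ A i) <-> ~ U A.
Proof.
split=> [HnA HA|HnA]; last by case: (in_ultra_setVsetC A U_ultra).
by apply: (filter_not_empty U); apply: filterS (filterI HA HnA) => i [].
Qed.

Lemma ultra_iff (A B : I -> Prop) : U (fun i => A i <-> B i) -> (U A <-> U B).
Proof.
by move=> HAB; split=> H; apply: filterS (filterI HAB H) => i [[? ?]]; auto.
Qed.

Lemma ultra_or (A B : I -> Prop) : U (fun i => A i \/ B i) <-> U A \/ U B.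
Proof.
rewrite -(ultra_iff (A := fun i => ~ (~ A i /\ ~ B i))); last first.
  by apply: filterS filterT => i _; tauto.
rewrite ultra_not ultra_and !ultra_not; tauto.
Qed.

Lemma ultra_imp (A B : I -> Prop) : U (fun i => A i -> B i) <-> (U A -> U B).
Proof.
rewrite -(ultra_iff (A := fun i => ~ A i \/ B i)); last first.
  by apply: filterS filterT => i _; tauto.
by rewrite ultra_or ultra_not; tauto.
Qed.

Definition eqU (x y : prod) : Prop := U (fun i => x i = y i).

Lemma eqU_refl x : eqU x x.
Proof. by apply: filterS filterT. Qed.

Lemma eqU_sym x y : eqU x y -> eqU y x.
Proof. exact: filterS. Qed.

Lemma eqU_trans x y z : eqU x y -> eqU y z -> eqU x z.
Proof. by move=> Hxy Hyz; apply: filterS (filterI Hxy Hyz) => i [-> ->]. Qed.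

Definition ucarrier := {P : prod -> Prop | exists x, P = eqU x}.

Definition ucls (x : prod) : ucarrier := exist _ (eqU x) (ex_intro _ x erefl).

Definition urep (c : ucarrier) : prod := projT1 (cid (proj2_sig c)).

Lemma ucls_eq x y : ucls x = ucls y <-> eqU x y.
Proof.
split=> [/(congr1 sval) /= ->|Hxy]; first exact: eqU_refl.
apply: eq_exist_uncurried; exists (funext (fun z => propext (conj
  (eqU_trans (eqU_sym Hxy)) (eqU_trans Hxy)))).
exact: Prop_irrelevance.
Qed.

Lemma uclsK c : ucls (urep c) = c.
Proof.
case: c => P HP; rewrite /urep /=; case: cid => x /= Ex; subst P.
by congr exist; exact: Prop_irrelevance.
Qed.

Lemma urepK x : eqU (urep (ucls x)) x.
Proof. by apply/ucls_eq; rewrite uclsK. Qed.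

Definition ulift1 (f : forall i, carrier (Ms i) -> carrier (Ms i)) (c : ucarrier) :=
  ucls (fun i => f i (urep c i)).

Definition ulift2 (f : forall i, carrier (Ms i) -> carrier (Ms i) -> carrier (Ms i))
  (c d : ucarrier) := ucls (fun i => f i (urep c i) (urep d i)).

Definition ultraproduct : structure := Structure ucarrier
  (ucls (fun i => s_zero (Ms i))) (ucls (fun i => s_one (Ms i)))
  (ulift2 (fun i => s_add (Ms i))) (ulift2 (fun i => s_sub (Ms i)))
  (ulift2 (fun i => s_mul (Ms i))) (ulift2 (fun i => s_div (Ms i)))
  (fun a => ulift1 (fun i => s_scal (Ms i) a))
  (fun c d => U (fun i => s_lt (Ms i) (urep c i) (urep d i))).

Lemma ulift1_cls f x : ulift1 f (ucls x) = ucls (fun i => f i (x i)).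
Proof. by apply/ucls_eq; apply: filterS (urepK x) => i ->. Qed.

Lemma ulift2_cls f x y : ulift2 f (ucls x) (ucls y) = ucls (fun i => f i (x i) (y i)).
Proof. by apply/ucls_eq; apply: filterS (filterI (urepK x) (urepK y)) => i [-> ->]. Qed.

Lemma urel_cls (r : forall i, carrier (Ms i) -> carrier (Ms i) -> Prop) x y :
  U (fun i => r i (urep (ucls x) i) (urep (ucls y) i)) <-> U (fun i => r i (x i) (y i)).
Proof. by apply: ultra_iff; apply: filterS (filterI (urepK x) (urepK y)) => i [-> ->]. Qed.

Definition ucoord (E : nat -> ucarrier) (i : I) : nat -> carrier (Ms i) :=
  fun n => urep (E n) i.

Lemma holds_ucoord_upd E x c p :
  (fun i => holds (Ms i) (ucoord (upd E x c) i) p) =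
  (fun i => holds (Ms i) (upd (ucoord E i) x (urep c i)) p).
Proof.
apply: funext => i; congr holds; apply: funext => n.
by rewrite /ucoord /upd; case: PeanoNat.Nat.eqb.
Qed.

Lemma eval_t_ultraproduct E t :
  eval_t ultraproduct E t = ucls (fun i => eval_t (Ms i) (ucoord E i) t).
Proof.
elim: t => /= [n|||u -> v ->|u -> v ->|u -> v ->|u -> v ->|a u ->];
  by rewrite ?ulift1_cls ?ulift2_cls // uclsK.
Qed.

Lemma ultra_exists (A : forall i, carrier (Ms i) -> Prop) :
  U (fun i => exists v, A i v) <-> exists c, U (fun i => A i (urep c i)).
Proof.
split=> [HA|[c Hc]]; last by apply: filterS Hc => i Hi; exists (urep c i).
pose w i := if pselect (exists v, A i v) is left h then projT1 (cid h) else s_zero (Ms i).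
exists (ucls w); apply: filterS (filterI HA (urepK w)) => i [Hi ->].
by rewrite /w; case: pselect => // h; case: cid.
Qed.

Lemma ultra_forall (A : forall i, carrier (Ms i) -> Prop) :
  U (fun i => forall v, A i v) <-> forall c, U (fun i => A i (urep c i)).
Proof.
have -> : (fun i => forall v, A i v) = (fun i => ~ exists v, ~ A i v).
  by apply: funext => i; rewrite existsNE notK.
rewrite ultra_not ultra_exists -forallNE.
by split=> H c; move: (H c); rewrite ultra_not notK.
Qed.

Theorem los p E :
  holds ultraproduct E p <-> U (fun i => holds (Ms i) (ucoord E i) p).
Proof.
elim: p E => /= [u v|u v||p IHp q IHq|p IHp q IHq|p IHp q IHq|x p IHp|x p IHp] E.
- by rewrite !eval_t_ultraproduct ucls_eq.
- by rewrite !eval_t_ultraproduct; apply: (urel_cls (fun i => s_lt (Ms i))).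
- by split=> // /(filter_not_empty U).
- by rewrite ultra_imp IHp IHq.
- by rewrite ultra_and IHp IHq.
- by rewrite ultra_or IHp IHq.
- by rewrite ultra_forall; split=> H c; move: (H c); rewrite IHp holds_ucoord_upd.
- by rewrite ultra_exists; split=> -[c Hc]; exists c; move: Hc; rewrite IHp holds_ucoord_upd.
Qed.

End Ultraproduct.

Fixpoint allp (A : Type) (Q : A -> Prop) (s : seq A) : Prop :=
  if s is x :: s' then Q x /\ allp Q s' else Logic.True.

Lemma allp_cat A (Q : A -> Prop) s1 s2 : allp Q (s1 ++ s2) <-> allp Q s1 /\ allp Q s2.
Proof. by elim: s1 => [|x s1 IH] /=; [tauto | rewrite IH; tauto]. Qed.

Lemma allp_map A B (Q : B -> Prop) (f : A -> B) s :
  allp Q (map f s) <-> allp (fun x => Q (f x)) s.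
Proof. by elim: s => [|x s IH] /=; [|rewrite IH]. Qed.

Lemma allp_flatten A (Q : A -> Prop) s : allp (allp Q) s -> allp Q (flatten s).
Proof. by elim: s => [|x s IH] //= [? ?]; apply/allp_cat; split; last exact: IH. Qed.

Lemma sub_allp A (Q Q' : A -> Prop) s : (forall x, Q x -> Q' x) -> allp Q s -> allp Q' s.
Proof. by move=> H; elim: s => [|x s IH] //= [? ?]; split; auto. Qed.

Lemma allp_and A (Q1 Q2 : A -> Prop) s :
  allp Q1 s -> allp Q2 s -> allp (fun x => Q1 x /\ Q2 x) s.
Proof. by elim: s => [|x s IH] //= [? ?] [? ?]; split => //; apply: IH. Qed.

Lemma allpP A (Q : A -> Prop) s : allp Q s <-> (forall x, List.In x s -> Q x).
Proof.
elim: s => [|x s IH] /=; first by split.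
rewrite IH; split=> [[Hx Hs] y [<-|/Hs]|H] //.
by split=> [|y Hy]; apply: H; [left|right].
Qed.

Lemma allpE A (p : pred A) s : allp p s <-> all p s.
Proof. by elim: s => [|x s IH] //=; rewrite IH; split=> [[-> ->]|/andP]. Qed.

Lemma allp_filter A (p : pred A) (Q : A -> Prop) s :
  allp Q [seq x <- s | p x] <-> allp (fun x => p x -> Q x) s.
Proof.
elim: s => [|x s IH] //=; case: (p x) => /=; rewrite IH; last by intuition.
by split=> [[Qx Hs]|[Qx Hs]]; split=> //; apply: Qx.
Qed.

Lemma cat_subset (T : eqType) (s1 s2 s : seq T) :
  {subset s1 ++ s2 <= s} -> {subset s1 <= s} /\ {subset s2 <= s}.
Proof. by move=> H; split=> x Hx; rewrite H // mem_cat Hx ?orbT. Qed.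

(** * Constants introduced by quantifier elimination *)

Section QEConstants.
Variables (F : realFieldType) (P : F -> Prop).
Hypothesis P_rat : forall q : rat, P (ratr q).

Lemma P_int (z : int) : P z%:~R.
Proof. by rewrite -ratr_int; apply: P_rat. Qed.

Lemma P_nat n : P n%:R.
Proof. exact: (P_int n). Qed.

Lemma P_0 : P 0.
Proof. exact: (P_nat 0). Qed.

Lemma P_N1 : P (-1).
Proof. by rewrite -(rmorphN1 (@ratr F)); apply: P_rat. Qed.

#[local] Hint Resolve P_0 P_N1 : core.

Fixpoint term_over (t : qe_rcf.term F) : Prop :=
  match t with
  | qe_rcf.Var _ | qe_rcf.NatConst _ => Logic.True
  | qe_rcf.Const c => P c
  | qe_rcf.Add u v | qe_rcf.Mul u v => term_over u /\ term_over v
  | qe_rcf.Opp u | qe_rcf.NatMul u _ | qe_rcf.Exp u _ => term_over u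
  end.

Fixpoint qf_over (f : qe_rcf.formula F) : Prop :=
  match f with
  | qe_rcf.Bool _ => Logic.True
  | qe_rcf.Equal u v | qe_rcf.Lt u v | qe_rcf.Le u v => term_over u /\ term_over v
  | qe_rcf.And f g | qe_rcf.Or f g | qe_rcf.Implies f g => qf_over f /\ qf_over g
  | qe_rcf.Not f => qf_over f
  end.

Local Notation poly_over := (allp term_over).
Local Notation polys_over := (allp poly_over).

Ltac split_over := repeat (match goal with
  | |- _ /\ _ => split
  | |- _ -> _ => intro
  | |- Logic.True => exact: Logic.I
  | H : _ /\ _ |- _ => destruct H
  | |- _ => progress simpl
  end); try assumption; auto.

Lemma If_over a b c : qf_over a -> qf_over b -> qf_over c -> qf_over (If a b c).
Proof. by move=> *; rewrite /If; split_over. Qed.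

Lemma Size_over p k : poly_over p -> (forall n, qf_over (k n)) -> qf_over (Size p k).
Proof.
elim: p k => [|c p IH] k /= Hp Hk; first exact: Hk.
case: Hp => Hc Hp; apply: IH => // -[|n] //; apply: If_over; split_over.
Qed.

Lemma Isnull_over p k : poly_over p -> (forall b, qf_over (k b)) -> qf_over (Isnull p k).
Proof. by move=> Hp Hk; apply: Size_over. Qed.

Lemma LtSize_over p q k :
  poly_over p -> poly_over q -> (forall b, qf_over (k b)) -> qf_over (LtSize p q k).
Proof. by move=> Hp Hq Hk; apply: Size_over => // n; apply: Size_over. Qed.

Lemma LeadCoef_over p k :
  poly_over p -> (forall t, term_over t -> qf_over (k t)) -> qf_over (LeadCoef p k).
Proof.
elim: p k => [|c p IH] k /= Hp Hk; first exact: Hk.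
case: Hp => Hc Hp; apply: IH => // l Hl; apply: If_over; split_over.
Qed.

Lemma AmulXn_over a n : term_over a -> poly_over (AmulXn a n).
Proof. by elim: n => [|n IH] /=; split_over. Qed.

Lemma AddPoly_over p q : poly_over p -> poly_over q -> poly_over (AddPoly p q).
Proof. by elim: p q => [|a p IH] [|b q] //= [Ha Hp] [Hb Hq]; split_over. Qed.

Lemma ScalPoly_over c p : term_over c -> poly_over p -> poly_over (ScalPoly c p).
Proof. by move=> Hc; elim: p => [|a p IH] //= [Ha Hp]; split_over. Qed.

Lemma MulPoly_over p q : poly_over p -> poly_over q -> poly_over (MulPoly p q).
Proof.
elim: p => [|a p IH] //= [Ha Hp] Hq.
by apply: AddPoly_over; [exact: ScalPoly_over | split_over].
Qed.

Lemma ExpPoly_over p n : poly_over p -> poly_over (ExpPoly p n).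
Proof.
move=> Hp; rewrite /ExpPoly; case: n => [|n] /=; first by split_over.
by elim: n => [|n IH] //=; exact: MulPoly_over.
Qed.

Lemma OppPoly_over p : poly_over p -> poly_over (OppPoly p).
Proof. exact: ScalPoly_over. Qed.

Lemma NatMulPoly_over n p : poly_over p -> poly_over (NatMulPoly n p).
Proof. exact: ScalPoly_over. Qed.

Lemma Deriv_over p : poly_over p -> poly_over (Deriv p).
Proof. by elim: p => [|a p IH] //= [Ha Hp]; apply: AddPoly_over => //=; split_over. Qed.

Lemma Rediv_rec_loop_over q sq cq c qq r n k :
  poly_over q -> term_over cq -> poly_over qq -> poly_over r ->
  (forall c qq r, poly_over qq -> poly_over r -> qf_over (k (c, qq, r))) ->
  qf_over (Rediv_rec_loop q sq cq c qq r n k).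
Proof.
elim: n c qq r => [|n IH] c qq r Hq Hcq Hqq Hr Hk /=;
  apply: Size_over => // sr; case: ifP => _; try exact: Hk;
  apply: LeadCoef_over => // lr Hlr; [apply: Hk | apply: IH] => //.
all: apply: AddPoly_over; [apply: MulPoly_over => //=; split_over | ].
all: try exact: AmulXn_over.
all: by apply: OppPoly_over; apply: MulPoly_over => //; exact: AmulXn_over.
Qed.

Lemma Rediv_over p q k : poly_over p -> poly_over q ->
  (forall c qq r, poly_over qq -> poly_over r -> qf_over (k (c, qq, r))) ->
  qf_over (Rediv p q k).
Proof.
move=> Hp Hq Hk; rewrite /Rediv; apply: Isnull_over => // -[].
  by apply: Hk => //=; split_over.
apply: Size_over => // sq; apply: Size_over => // sp; apply: LeadCoef_over => // lq Hlq.
by apply: Rediv_rec_loop_over => //=; split_over.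
Qed.

Lemma Rmod_over p q k :
  poly_over p -> poly_over q -> (forall r, poly_over r -> qf_over (k r)) ->
  qf_over (Rmod p q k).
Proof. by move=> Hp Hq Hk; apply: Rediv_over => // c qq r _; apply: Hk. Qed.

Lemma Rscal_over p q k :
  poly_over p -> poly_over q -> (forall n, qf_over (k n)) -> qf_over (Rscal p q k).
Proof. by move=> Hp Hq Hk; apply: Rediv_over. Qed.

Lemma Rgcd_loop_over n pp qq k :
  poly_over pp -> poly_over qq -> (forall r, poly_over r -> qf_over (k r)) ->
  qf_over (Rgcd_loop n pp qq k).
Proof.
elim: n pp qq => [|n IH] pp qq Hp Hq Hk /=; apply: Rmod_over => // r Hr;
  apply: Isnull_over => // -[]; try exact: Hk.
exact: IH.
Qed.

Lemma Rgcd_over p q k :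
  poly_over p -> poly_over q -> (forall r, poly_over r -> qf_over (k r)) ->
  qf_over (Rgcd p q k).
Proof.
move=> Hp Hq Hk; rewrite /Rgcd; apply: LtSize_over => // -[];
  apply: Isnull_over => // -[]; try exact: Hk;
  apply: Size_over => // n; exact: Rgcd_loop_over.
Qed.

Lemma BigRgcd_over ps k :
  polys_over ps -> (forall r, poly_over r -> qf_over (k r)) -> qf_over (BigRgcd ps k).
Proof.
elim: ps k => [|p ps IH] k /= Hps Hk; first by apply: Hk; split_over.
by case: Hps => Hp Hps; apply: IH => // r Hr; exact: Rgcd_over.
Qed.

Lemma Changes_over s k : poly_over s -> (forall n, qf_over (k n)) -> qf_over (Changes s k).
Proof.
elim: s k => [|a s IH] k /= Hs Hk; first exact: Hk.
case: Hs => Ha Hs; apply: IH => // v; apply: If_over => //=; split => //.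
by split => //; case: s Hs => //= b s [Hb _]; split_over.
Qed.

Lemma SeqPInfty_over ps k :
  polys_over ps -> (forall r, poly_over r -> qf_over (k r)) -> qf_over (SeqPInfty ps k).
Proof.
elim: ps k => [|p ps IH] k /= Hps Hk; first exact: Hk.
case: Hps => Hp Hps; apply: LeadCoef_over => // lp Hlp; apply: IH => // r Hr.
by apply: Hk; split_over.
Qed.

Lemma SeqMInfty_over ps k :
  polys_over ps -> (forall r, poly_over r -> qf_over (k r)) -> qf_over (SeqMInfty ps k).
Proof.
elim: ps k => [|p ps IH] k /= Hps Hk; first exact: Hk.
case: Hps => Hp Hps; apply: LeadCoef_over => // lp Hlp; apply: Size_over => // sp.
by apply: IH => // r Hr; apply: Hk => /=; split_over.
Qed.

Lemma ChangesPoly_over ps k :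
  polys_over ps -> (forall n, qf_over (k n)) -> qf_over (ChangesPoly ps k).
Proof.
move=> Hps Hk; rewrite /ChangesPoly; apply: SeqMInfty_over => // m Hm.
apply: SeqPInfty_over => // pp Hpp; apply: Changes_over => // vm.
exact: Changes_over.
Qed.

Lemma NextMod_over p q k :
  poly_over p -> poly_over q -> (forall r, poly_over r -> qf_over (k r)) ->
  qf_over (NextMod p q k).
Proof.
move=> Hp Hq Hk; rewrite /NextMod; apply: LeadCoef_over => // lq Hlq.
apply: Rscal_over => // spq; apply: Rmod_over => // rpq Hr; apply: Hk.
exact: ScalPoly_over.
Qed.

Lemma ModsAux_over p q n k :
  poly_over p -> poly_over q -> (forall r, polys_over r -> qf_over (k r)) ->
  qf_over (ModsAux p q n k).
Proof.
elim: n p q k => [|n IH] p q k Hp Hq Hk /=; first exact: Hk.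
apply: Isnull_over => // -[]; first exact: Hk.
by apply: NextMod_over => // npq Hn; apply: IH => // ps Hps; apply: Hk; split_over.
Qed.

Lemma Mods_over p q k :
  poly_over p -> poly_over q -> (forall r, polys_over r -> qf_over (k r)) ->
  qf_over (Mods p q k).
Proof.
move=> Hp Hq Hk; rewrite /Mods; apply: Size_over => // sp; apply: Size_over => // sq.
exact: ModsAux_over.
Qed.

Lemma nth_poly_over s i : polys_over s -> poly_over (nth [::] s i).
Proof. by elim: s i => [|p s IH] [|i] //= [Hp Hs] //; exact: IH. Qed.

Lemma PolyComb_over sq sc : polys_over sq -> poly_over (PolyComb sq sc).
Proof.
move=> Hs; rewrite /PolyComb; elim: (iota _ _) => [|i r IH] /=.
  by split_over.
by apply: MulPoly_over => //; apply: ExpPoly_over; exact: nth_poly_over.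
Qed.

Lemma Pcq_over sq i : polys_over sq -> poly_over (Pcq sq i).
Proof.
move=> Hs; rewrite /Pcq; apply: nth_poly_over.
by elim: (sg_tab (size sq)) => [|a l IH] //=; split => //; apply: PolyComb_over.
Qed.

Lemma TaqR_over p q k :
  poly_over p -> poly_over q -> (forall n, qf_over (k n)) -> qf_over (TaqR p q k).
Proof.
move=> Hp Hq Hk; rewrite /TaqR; apply: Mods_over => //.
  by apply: MulPoly_over => //; apply: Deriv_over.
by move=> r Hr; apply: ChangesPoly_over.
Qed.

Lemma TaqsR_over p sq i k : poly_over p -> polys_over sq ->
  (forall t, term_over t -> qf_over (k t)) -> qf_over (TaqsR p sq i k).
Proof.
move=> Hp Hs Hk; rewrite /TaqsR; apply: TaqR_over => //; first exact: Pcq_over.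
by move=> n; apply: Hk => /=; apply: P_int.
Qed.

Lemma BoundingPoly_over sq : polys_over sq -> poly_over (BoundingPoly sq).
Proof.
move=> Hs; rewrite /BoundingPoly; apply: Deriv_over.
elim: sq Hs => [|a l IH] /= Hs; first by split_over.
by case: Hs => Ha Hl; apply: MulPoly_over => //; exact: IH.
Qed.

Lemma P_coefs n i : P (coefs F n i).
Proof.
rewrite /coefs.
have P_entry j : P ((castmx (erefl _, exp3n n)
    (invmx (map_mx ((intmul 1) : int -> F) (ctmat n)))) j ord0).
  rewrite castmxE /=.
  have -> : map_mx ((intmul 1) : int -> F) (ctmat n) =
      map_mx (@ratr F) (map_mx ((intmul 1) : int -> rat) (ctmat n)).
    by rewrite -map_mx_comp; apply/matrixP => a b; rewrite !mxE /= ratr_int.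
  by rewrite -map_invmx mxE; apply: P_rat.
elim: (enum _) i => [|a l IH] [|i] /=; by [exact: P_0 | exact: P_entry | exact: IH].
Qed.

Lemma Coefs_over n i : term_over (Coefs F n i).
Proof.
rewrite /Coefs /=; case: n => [|[|n]]; [exact: P_nat | | exact: P_coefs].
case: i => [|[|[|i]]] /=; rewrite ?nth_nil; try exact: P_0;
  by rewrite -(ratr_nat F 2) -fmorphV; apply: P_rat.
Qed.

Lemma CcountWeak_over p sq k : poly_over p -> polys_over sq ->
  (forall t, term_over t -> qf_over (k t)) -> qf_over (CcountWeak p sq k).
Proof.
move=> Hp Hs; rewrite /CcountWeak.
have : term_over (0%:R)%qfT by [].
move: (0%:R)%qfT (3 ^ size sq)%N k => s0 n.
elim: n s0 => [|n IH] s0 k Hs0 Hk /=; first exact: Hk.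
by apply: TaqsR_over => // x Hx; apply: IH => //=; split_over; exact: Coefs_over.
Qed.

Lemma bigAnd_over (r : seq (seq (qe_rcf.term F))) G : polys_over r ->
  (forall i, poly_over i -> qf_over (G i)) ->
  qf_over (reducebig (qe_rcf.Bool true) r (fun i => BigBody i qe_rcf.And true (G i))).
Proof.
move=> Hr HG; elim: r Hr => [|i r IH] //= [Hi Hr].
by split; [exact: HG | exact: IH].
Qed.

Lemma CcountGt0_over sp sq : polys_over sp -> polys_over sq -> qf_over (CcountGt0 sp sq).
Proof.
move=> Hp Hq; rewrite /CcountGt0; apply: BigRgcd_over => // p Hpp.
apply: Isnull_over => // -[] /=; last by apply: CcountWeak_over => // c Hc; split_over.
apply: CcountWeak_over => //; first exact: BoundingPoly_over.
move=> cw Hcw /=; split; [|split]; last by split_over.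
- by apply: bigAnd_over => // q Hq'; apply: LeadCoef_over => // lq Hlq; split_over.
- apply: bigAnd_over => // q Hq'; apply: Size_over => // n.
  by apply: LeadCoef_over => // lq Hlq; split_over.
Qed.

Lemma abstrX_over i t : term_over t -> poly_over (abstrX i t).
Proof.
elim: t => [n|c|n|u Hu v Hv|u Hu|u Hu n|u Hu v Hv|u Hu n] /= Ht.
- by case: ifP => _; split_over.
- by split_over.
- by split_over.
- by case: Ht => ? ?; apply: AddPoly_over; [apply: Hu | apply: Hv].
- by apply: OppPoly_over; apply: Hu.
- by apply: NatMulPoly_over; apply: Hu.
- by case: Ht => ? ?; apply: MulPoly_over; [apply: Hu | apply: Hv].
- by apply: ExpPoly_over; apply: Hu.
Qed.

Fixpoint gterm_over (t : GRing.term F) : Prop :=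
  match t with
  | GRing.Var _ | GRing.NatConst _ => Logic.True
  | GRing.Const c => P c
  | GRing.Add u v | GRing.Mul u v => gterm_over u /\ gterm_over v
  | GRing.Opp u | GRing.NatMul u _ | GRing.Exp u _ | GRing.Inv u => gterm_over u
  end.

Local Notation gterms_over := (allp gterm_over).

Lemma to_rterm_over t : gterm_over t -> term_over (qe_rcf.to_rterm t).
Proof. by elim: t => //= *; split_over. Qed.

Lemma wproj_over n s : gterms_over s.1 -> gterms_over s.2 -> qf_over (wproj n s).
Proof.
have Habstr s' : gterms_over s' -> polys_over (map (abstrX n \o qe_rcf.to_rterm) s').
  rewrite allp_map; apply: sub_allp => t /to_rterm_over; exact: abstrX_over.
by move=> H1 H2; rewrite /wproj; apply: CcountGt0_over; apply: Habstr.
Qed.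

Fixpoint oformula_over (f : ord.formula F) : Prop :=
  match f with
  | ord.Bool _ => Logic.True
  | ord.Equal u v | ord.Lt u v | ord.Le u v => gterm_over u /\ gterm_over v
  | ord.Unit u => gterm_over u
  | ord.And f g | ord.Or f g | ord.Implies f g => oformula_over f /\ oformula_over g
  | ord.Not f | ord.Exists _ f | ord.Forall _ f => oformula_over f
  end.

Lemma qfr_to_formula_over f : qf_over f -> oformula_over (qe_rcf.qfr_to_formula f).
Proof.
have Ht t : term_over t -> gterm_over (qe_rcf.rterm_to_term t).
  by elim: t => //= *; split_over.
by elim: f => //= *; split_over.
Qed.

Lemma to_rterm_gterm_over t r n : gterm_over t -> gterms_over r ->
  gterm_over (GRing.to_rterm t r n).1 /\ gterms_over (GRing.to_rterm t r n).2.
Proof.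
have gterms_rcons r' x : gterms_over r' -> gterm_over x -> gterms_over (rcons r' x).
  by rewrite -cats1 allp_cat /=.
elim: t r => //= [u Hu v Hv|u Hu|u Hu m|u Hu v Hv|u Hu|u Hu m] r;
  [case=> Hu' Hv' Hr | move=> Hu' Hr | move=> Hu' Hr
  |case=> Hu' Hv' Hr | move=> Hu' Hr | move=> Hu' Hr];
  case: (Hu r Hu' Hr); case: (GRing.to_rterm u r n) => u' r1 /= H1 H2; try by split_over.
all: by case: (Hv r1 Hv' H2); case: (GRing.to_rterm v r1 n) => v' r2 /= H3 H4; split_over.
Qed.

Lemma rform_over t : gterm_over t ->
  [/\ oformula_over (ord.eq0_rform t), oformula_over (ord.lt0_rform t)
    & oformula_over (ord.leq0_rform t)].
Proof.
move=> Ht; rewrite /ord.eq0_rform /ord.lt0_rform /ord.leq0_rform.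
case: (to_rterm_gterm_over (GRing.ub_var t) Ht (r := [::]) Logic.I).
case: (GRing.to_rterm t [::] _) => t' r /= H1 H2.
by split; elim: r H2 (GRing.ub_var t) => [|a r IH] /= H2 m; split_over; apply: IH.
Qed.

Lemma to_rform_over f : oformula_over f -> oformula_over (ord.to_rform f).
Proof.
elim: f => //= [u v [Hu Hv]|u v [Hu Hv]|u v [Hu Hv]|u Hu|f Hf g Hg|f Hf g Hg|f Hf g Hg].
- by have [] := rform_over (t := (u - v)%T) (conj Hu Hv).
- by have [] := rform_over (t := (u - v)%T) (conj Hu Hv).
- by have [] := rform_over (t := (u - v)%T) (conj Hu Hv).
- by have [] := rform_over (t := (u / u - 1)%T) (conj (conj Hu Hu) Logic.I).
all: by move=> [/Hf ? /Hg ?].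
Qed.

Definition oclause_over (c : ord.oclause F) : Prop :=
  let: ord.Oclause a b d e := c in
  [/\ gterms_over a, gterms_over b, gterms_over d & gterms_over e].

Local Notation oclauses_over := (allp oclause_over).

Lemma and_odnf_over a b :
  oclauses_over a -> oclauses_over b -> oclauses_over (ord.and_odnf a b).
Proof.
move=> Ha Hb; rewrite /ord.and_odnf.
elim: a Ha => [|c a IH] /= Ha; first by rewrite big_nil.
rewrite big_cons; case: Ha => Hc Ha; apply/allp_cat; split; last exact: IH.
rewrite allp_map; apply: sub_allp Hb => -[b1 b2 b3 b4] [G1 G2 G3 G4].
by case: c Hc => a1 a2 a3 a4 [H1 H2 H3 H4]; split; apply/allp_cat.
Qed.

Lemma qf_to_odnf_over f neg : oformula_over f -> oclauses_over (ord.qf_to_odnf f neg).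
Proof.
elim: f neg => //=.
- by move=> b neg _; case: (b (+) neg).
- by move=> u v neg [Hu Hv]; case: neg; split_over.
- by move=> u v neg [Hu Hv]; case: neg; split_over.
- by move=> u v neg [Hu Hv]; case: neg; split_over.
- by move=> u neg Hu; case: neg; split_over.
- move=> f Hf g Hg [] [H1 H2] /=; first by apply/allp_cat; split; [apply: Hf | apply: Hg].
  by apply: and_odnf_over; [apply: Hf | apply: Hg].
- move=> f Hf g Hg [] [H1 H2] /=; first by apply: and_odnf_over; [apply: Hf | apply: Hg].
  by apply/allp_cat; split; [apply: Hf | apply: Hg].
- move=> f Hf g Hg [] [H1 H2] /=; first by apply: and_odnf_over; [apply: Hf | apply: Hg].
  by apply/allp_cat; split; [apply: Hf | apply: Hg].
- by move=> f Hf neg H; apply: Hf.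
- by move=> n f Hf neg _; case: neg; split_over.
- by move=> n f Hf neg _; case: neg; split_over.
Qed.

Lemma oclause_to_w_over c : oclause_over c ->
  allp (fun x => gterms_over x.1 /\ gterms_over x.2) (ord.oclause_to_w c).
Proof.
have leq_elim_over a b d : gterms_over a -> gterms_over b -> gterms_over d ->
    allp (fun x => gterms_over x.1 /\ gterms_over x.2) (ord.leq_elim_aux a b d).
  move=> Ha Hb; elim: d => [|t d IH] /= => [|[Ht /IH Hd]]; first by split_over.
  by apply/allp_cat; split; rewrite allp_map; apply: sub_allp Hd => x [? ?]; split_over.
have neq_elim_over a b : gterms_over a -> gterms_over b ->
    allp gterms_over (ord.neq_elim_aux a b).
  move=> Ha; elim: b => [|t b IH] /= => [|[Ht /IH Hb]]; first by split_over.
  by apply/allp_cat; split; rewrite allp_map; apply: sub_allp Hb => x ?; split_over.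
case: c => a b d e [Ha Hb Hd He].
rewrite /ord.oclause_to_w /ord.oclause_neq_leq_elim allp_map.
apply: allp_flatten; rewrite allp_map /ord.oclause_leq_elim allp_map.
apply: sub_allp (leq_elim_over _ _ _ Ha Hd He) => -[x1 x2] [H1 H2] /=.
by rewrite allp_map; apply: sub_allp (neq_elim_over _ _ H2 Hb) => y Hy /=; split_over.
Qed.

Lemma foldr_Or_over (s : seq (ord.formula F)) :
  allp oformula_over s -> oformula_over (foldr ord.Or ord.False s).
Proof. by elim: s => [|x s IH] //= [? ?]; split => //; apply: IH. Qed.

Lemma quantifier_elim_over f : oformula_over f ->
  oformula_over (ord.quantifier_elim (fun n s => qe_rcf.qfr_to_formula (wproj n s)) f).
Proof.
have proj_over g n neg : oformula_over g -> oformula_over (foldr ord.Or ord.False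
    [seq ord.proj (fun n s => qe_rcf.qfr_to_formula (wproj n s)) n c
       | c <- ord.qf_to_odnf g neg]).
  move=> Hg; apply: foldr_Or_over; rewrite allp_map.
  apply: sub_allp (qf_to_odnf_over neg Hg) => c Hc; apply: foldr_Or_over.
  rewrite allp_map; apply: sub_allp (oclause_to_w_over Hc) => y [? ?].
  by apply: qfr_to_formula_over; exact: wproj_over.
elim: f => //= [f Hf g Hg|f Hf g Hg|f Hf g Hg|n f Hf|n f Hf] => [[? ?]|[? ?]|[? ?]|H|H];
  by [split_over | apply: proj_over; apply: Hf].
Qed.

End QEConstants.

(** * Algebraic witnesses in archimedean real closed fields *)

Section AlgebraicTransfer.
Variable R : archiRcfType.

Local Notation alg := (algebraicOver (@ratr R)).

Lemma algebraic_root (p : {poly R}) x :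
  p != 0 -> (forall k, alg p`_k) -> root p x -> alg x.
Proof.
move=> p0 Hp px; apply/integral_algebraic; apply: (integral_root p0 px).
by move=> z /(nthP 0) [k _ <-]; apply/integral_algebraic.
Qed.

Lemma algebraic_dense (x d : R) : 0 < d -> exists2 y, alg y & `|y - x| < d.
Proof.
move=> d0; pose n := (Num.Def.archi_bound d^-1).+1.
have n0 : (0 : R) < n%:R by rewrite ltr0n.
have Hdn : n%:R^-1 < d.
  rewrite -[d]invrK ltf_pV2 ?posrE ?invr_gt0 //.
  by apply: (lt_le_trans (archi_boundP _)); [rewrite invr_ge0 ltW | rewrite ler_nat].
exists ((Num.floor (x * n%:R))%:~R / n%:R).
  by rewrite -ratr_int -ratr_nat -fmorph_div; apply: algebraic_id.
have [h1 h2] := andP (floor_itv (x * n%:R)); rewrite intrD in h2.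
set f := (Num.floor (x * n%:R))%:~R in h1 h2 *.
have Hlo : x - n%:R^-1 < f / n%:R by rewrite ltr_pdivlMr // mulrBl mulVf ?gt_eqF //; lra.
have Hhi : f / n%:R <= x by rewrite ler_pdivrMr.
by rewrite ltr_norml; apply/andP; split; lra.
Qed.

Definition near (x : R) (Q : R -> Prop) := exists2 d, 0 < d & forall y, `|y - x| < d -> Q y.

Lemma near_and x (Q1 Q2 : R -> Prop) :
  near x Q1 -> near x Q2 -> near x (fun y => Q1 y /\ Q2 y).
Proof.
move=> [d1 d1p H1] [d2 d2p H2]; exists (Num.min d1 d2); first by rewrite lt_min d1p.
by move=> y; rewrite lt_min => /andP [y1 y2]; split; [exact: H1 | exact: H2].
Qed.

Lemma near_allp A x (Q : A -> R -> Prop) s :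
  allp (fun a => near x (Q a)) s -> near x (fun y => allp (fun a => Q a y) s).
Proof.
elim: s => [|a s IH] /=; first by exists 1.
by case=> Ha /IH Hs; apply: near_and.
Qed.

Lemma sgr_lt_norm_sub (u v : R) : `|v - u| < `|u| -> Num.sg v = Num.sg u.
Proof.
have [u0|u0|->] := ltgtP u 0; last by rewrite normr0 normr_lt0.
- rewrite (ltr0_norm u0) ltr_norml => /andP [_ h].
  by rewrite !ltr0_sg //; lra.
- rewrite (gtr0_norm u0) ltr_norml => /andP [h _].
  by rewrite !gtr0_sg //; lra.
Qed.

Lemma near_sgr_poly (p : {poly R}) x : ~ alg x -> (forall k, alg p`_k) ->
  near x (fun y => Num.sg p.[y] = Num.sg p.[x]).
Proof.
move=> nx Hp; have [->|p0] := eqVneq p 0; first by exists 1 => // y _; rewrite !horner0.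
have px : 0 < `|p.[x]|.
  by rewrite normr_gt0; apply: contra_notN nx => px; apply: (algebraic_root p0 Hp).
have [d d0 Hd] := poly_cont x p px.
by exists d => // y /Hd /sgr_lt_norm_sub.
Qed.

Lemma eval_term_over_algebraic (e : seq R) t :
  (forall j, alg e`_j) -> term_over alg t -> alg (qe_rcf.eval e t).
Proof.
move=> He; elim: t => //= [n _|u Hu v Hv [/Hu ? /Hv ?]|u Hu /Hu|u Hu n /Hu Hu'
  |u Hu v Hv [/Hu ? /Hv ?]|u Hu n /Hu Hu'].
- by rewrite -ratr_nat; apply: algebraic_id.
- exact: algebraic_add.
- exact: algebraic_opp.
- by elim: n => [|n IH]; rewrite ?mulr0n ?mulrS; [apply: algebraic0 | apply: algebraic_add].
- exact: algebraic_mul.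
- by elim: n => [|n IH]; rewrite ?expr0 ?exprS; [apply: algebraic1 | apply: algebraic_mul].
Qed.

Lemma gterm_poly (e : seq R) i (t : GRing.term R) :
  (forall j, alg e`_j) -> GRing.rterm t -> gterm_over alg t ->
  exists2 p : {poly R}, (forall k, alg p`_k) &
    forall x, p.[x] = GRing.eval (set_nth 0 e i x) t.
Proof.
move=> He rt Ht; exists (eval_poly e (abstrX i (qe_rcf.to_rterm t))); last first.
  by move=> x; rewrite abstrXP evalE to_rtermE.
move=> k; rewrite eval_polyP coef_Poly.
have : allp (term_over alg) (abstrX i (qe_rcf.to_rterm t)).
  by apply: abstrX_over; [exact: algebraic_id | exact: to_rterm_over].
elim: (abstrX _ _) k => [|s p IH] k /=; first by rewrite nth_nil => _; exact: algebraic0.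
case=> Hs Hp; case: k => [|k] /=; [exact: eval_term_over_algebraic | exact: IH].
Qed.

Definition oclause_holds (e : seq R) (c : ord.oclause R) : bool :=
  let: ord.Oclause a b d l := c in
  [&& all (fun t => GRing.eval e t == 0) a, all (fun t => GRing.eval e t != 0) b,
      all (fun t => 0 < GRing.eval e t) d & all (fun t => 0 <= GRing.eval e t) l].

Lemma qf_eval_odnf e cs : ord.qf_eval e (ord.odnf_to_oform cs) = has (oclause_holds e) cs.
Proof.
have Hfoldr (lit : GRing.term R -> ord.formula R) l :
    ord.qf_eval e (foldr (fun t => ord.And (lit t)) ord.True l) =
    all (fun t => ord.qf_eval e (lit t)) l.
  by elim: l => //= t l ->.
by elim: cs => [|[a b d l] cs IH] //=; rewrite IH !Hfoldr.
Qed.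

Section OneVariable.
Variables (e : seq R) (i : nat).
Hypothesis He : forall j, alg e`_j.

Lemma near_literals x (lit : R -> bool) (l : seq (GRing.term R)) : ~ alg x ->
  (forall u v, Num.sg u = Num.sg v -> lit u = lit v) ->
  all (@GRing.rterm R) l -> allp (gterm_over alg) l ->
  all (fun t => lit (GRing.eval (set_nth 0 e i x) t)) l ->
  near x (fun y => all (fun t => lit (GRing.eval (set_nth 0 e i y) t)) l).
Proof.
move=> nx Hlit /allpE rl Hl /allpE El.
have [d d0 Hd] : near x (fun y => allp (fun t => lit (GRing.eval (set_nth 0 e i y) t)) l).
  apply: near_allp; apply: sub_allp (allp_and (allp_and rl Hl) El) => t [[rt gt] Et].
  have [p Hp Hpx] := gterm_poly i He rt gt.
  have [d d0 Hd] := near_sgr_poly nx Hp.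
  by exists d => // y /Hd Hy; rewrite -Hpx (Hlit _ _ Hy) Hpx.
by exists d => // y /Hd /allpE.
Qed.

Lemma oclause_holds_near x c : ~ alg x ->
  oclause_over alg c -> ord.dnf_rterm c -> oclause_holds (set_nth 0 e i x) c ->
  near x (fun y => oclause_holds (set_nth 0 e i y) c).
Proof.
move=> nx; case: c => a b d l [Ha Hb Hd Hl] /and4P [ra rb rd rl] /and4P [Ea Eb Ed El].
have [] := near_and (near_literals (lit := fun v => v == 0) nx _ ra Ha Ea)
  (near_and (near_literals (lit := fun v => v != 0) nx _ rb Hb Eb)
  (near_and (near_literals (lit := fun v => 0 < v) nx _ rd Hd Ed)
            (near_literals (lit := fun v => 0 <= v) nx _ rl Hl El))).
- by move=> u v Huv; rewrite -sgr_eq0 Huv sgr_eq0.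
- by move=> u v Huv; rewrite -sgr_eq0 Huv sgr_eq0.
- by move=> u v Huv; rewrite -sgr_gt0 Huv sgr_gt0.
- by move=> u v Huv; rewrite -sgr_ge0 Huv sgr_ge0.
by move=> r r0 Hr; exists r => // y /Hr [? [? [? ?]]]; apply/and4P.
Qed.

Lemma qf_algebraic_witness g x :
  ord.qf_form g && ord.rformula g -> oformula_over alg g ->
  ord.qf_eval (set_nth 0 e i x) g -> exists2 y, alg y & ord.qf_eval (set_nth 0 e i y) g.
Proof.
move=> Hg Og Hx; have [ax|nx] := pselect (alg x); first by exists x.
suff [y ay Hy] : exists2 y, alg y &
    has (oclause_holds (set_nth 0 e i y)) (ord.qf_to_odnf g false).
  by exists y => //; rewrite -(ord.qf_to_dnfP _ Hg) qf_eval_odnf.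
move: Hx; rewrite -(ord.qf_to_dnfP _ Hg) qf_eval_odnf.
have := ord.qf_to_dnf_rterm false (proj2 (andP Hg)).
have := qf_to_odnf_over false Og.
elim: (ord.qf_to_odnf g false) => [|c cs IH] /=; first by move=> _ _ [].
move=> [Oc Ocs] /andP [rc rcs] /orP [Hc|Hcs].
  have [d d0 Hd] := oclause_holds_near nx Oc rc Hc.
  by have [y ay Hy] := algebraic_dense x d0; exists y => //; rewrite Hd.
by have [y ay Hy] := IH Ocs rcs Hcs; exists y => //; rewrite Hy orbT.
Qed.

End OneVariable.

Lemma exists_algebraic_witness (f : ord.formula R) (e : seq R) i :
  oformula_over alg f -> (forall j, alg e`_j) ->
  (exists x, ord.holds (set_nth 0 e i x) f) ->
  exists2 x, alg x & ord.holds (set_nth 0 e i x) f.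
Proof.
move=> Of He [x Hx].
pose g := ord.quantifier_elim (fun n s => qe_rcf.qfr_to_formula (wproj n s)) (ord.to_rform f).
have Eg z : ord.holds z f <-> ord.qf_eval z g by split=> [/rcf_satP|/rcf_satP].
have Hg : ord.qf_form g && ord.rformula g.
  by apply: ord.quantifier_elim_wf; [exact: wf_QE_wproj | exact: ord.to_rform_rformula].
have Og : oformula_over alg g.
  by apply: quantifier_elim_over; [exact: algebraic_id | exact: to_rform_over].
have [y ay Hy] := qf_algebraic_witness He Hg Og (iffLR (Eg _) Hx).
by exists y => //; apply/Eg.
Qed.

Lemma holds_exists_vars (js : seq nat) (f : ord.formula R) (s : seq R) :
  ord.holds s (foldr (@ord.Exists R) f js) <->
  exists2 s2 : seq R, (forall m, m \notin js -> s2`_m = s`_m) & ord.holds s2 f.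
Proof.
elim: js s => [|k js IH] s /=.
  by split=> [Hs|[s2 Hs2]]; [exists s | apply: ord.eq_holds => m; rewrite Hs2].
split=> [[x /IH [s2 Hs2 Hf]]|[s2 Hs2 Hf]].
  exists s2 => // m; rewrite inE negb_or => /andP [mk mjs].
  by rewrite Hs2 // nth_set_nth /= (negbTE mk).
exists s2`_k; apply/IH; exists s2 => // m mjs; rewrite nth_set_nth /=.
by case: eqP => [->|/eqP mk] //; rewrite Hs2 // inE negb_or mk.
Qed.

Lemma algebraic_specialization_at (js : seq nat) (f : ord.formula R) (s : seq R) :
  oformula_over alg f -> (forall m, m \notin js -> alg s`_m) -> ord.holds s f ->
  exists s', [/\ forall m, alg s'`_m, forall m, m \notin js -> s'`_m = s`_m
                 & ord.holds s' f].
Proof.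
elim: js s => [|j js IH] s Of Hs Hf; first by exists s; split=> // m; apply: Hs.
(* Only the entries of [s] outside [j :: js] matter for [exists js, f] with [j] free:
   zero the others, so that all the parameters but [j] are algebraic. *)
pose e := mkseq (fun m => if m \in j :: js then 0 else s`_m) (size s).
have Ee m : e`_m = if m \in j :: js then 0 else s`_m.
  have [ms|ms] := ltnP m (size s); first by rewrite nth_mkseq.
  by rewrite !nth_default ?size_mkseq //; case: ifP.
have He m : alg e`_m.
  by rewrite Ee; case: ifPn => [_|/Hs //]; exact: algebraic0.
have [x ax /holds_exists_vars [s2 Hs2 Hf2]] :
    exists2 x, alg x & ord.holds (set_nth 0 e j x) (foldr (@ord.Exists R) f js).
  apply: exists_algebraic_witness => //; first by elim: (js).
  exists s`_j; apply/holds_exists_vars; exists s => // m mjs.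
  rewrite nth_set_nth /= Ee inE; case: eqP => [-> //|_].
  by rewrite (negbTE mjs).
have Hs2a m : m \notin js -> alg s2`_m.
  by move=> mjs; rewrite Hs2 // nth_set_nth /=; case: eqP.
have [s' [Hs' Es' Hf']] := IH s2 Of Hs2a Hf2.
exists s'; split=> // m; rewrite inE negb_or => /andP [mj mjs].
by rewrite Es' // Hs2 // nth_set_nth /= (negbTE mj) Ee inE (negbTE mj) (negbTE mjs).
Qed.

Lemma algebraic_specialization (f : ord.formula R) (s : seq R) :
  oformula_over alg f -> ord.holds s f ->
  exists s', [/\ forall m, alg s'`_m, forall m, alg s`_m -> s'`_m = s`_m
                 & ord.holds s' f].
Proof.
pose js := [seq m <- iota 0 (size s) | ~~ `[< alg s`_m >]].
move=> Of Hf; have [|s' [Hs' Es' Hf']] := algebraic_specialization_at (js := js) Of _ Hf.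
  move=> m; rewrite mem_filter mem_iota add0n /= negb_and negbK.
  case/orP => [/asboolP //|]; rewrite -leqNgt => ms.
  by rewrite nth_default //; exact: algebraic0.
exists s'; split=> // m am; apply: Es'.
by rewrite mem_filter negb_and negbK; apply/orP; left; apply/asboolP.
Qed.

End AlgebraicTransfer.

Lemma IZR_Z_of_int (k : int) : Rdefinitions.IZR (Z_of_int k) = k%:~R.
Proof.
case: k => n /=; first by rewrite -RIneq.INR_IZR_INZ INRE.
by rewrite RIneq.opp_IZR -RIneq.INR_IZR_INZ INRE NegzE mulrNz addn1.
Qed.

Lemma IZR_int_of_Z (z : BinNums.Z) : Rdefinitions.IZR z = (int_of_Z z)%:~R.
Proof. by rewrite -{1}(int_of_ZK z) IZR_Z_of_int. Qed.

Lemma zpoly_evalE cs x :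
  zpoly_eval cs x = (map_poly intr (Poly (map int_of_Z cs))).[x].
Proof.
rewrite map_Poly_id0 // -map_comp; elim: cs => [|c cs IH] /=; first by rewrite horner0.
by rewrite IH cons_poly_def hornerD hornerMX hornerC IZR_int_of_Z addrC mulrC.
Qed.

Lemma Poly_eq0 (R : nzSemiRingType) (s : seq R) : (Poly s == 0) = all (eq_op^~ 0) s.
Proof.
apply/eqP/allP => [s0 c /(nthP 0) [i _ <-]|s0]; first by rewrite -coef_Poly s0 coef0.
apply/polyP => i; rewrite coef_Poly coef0; have [si|si] := ltnP i (size s).
  by apply/eqP; apply: s0; rewrite mem_nth.
by rewrite nth_default.
Qed.

Lemma Poly_int_of_Z_neq0 (cs : seq BinNums.Z) :
  (exists c, List.In c cs /\ c <> BinNums.Z0) <-> Poly (map int_of_Z cs) != 0.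
Proof.
rewrite Poly_eq0; elim: cs => [|c cs IH] /=; first by split=> // -[c []].
rewrite negb_and; split=> [[d [[<-|Hd] d0]]|/orP [c0|/IH [d [Hd d0]]]].
- by apply/orP; left; apply: contra_notN d0 => /eqP /(congr1 Z_of_int); rewrite int_of_ZK.
- by apply/orP; right; apply/IH; exists d.
- by exists c; split; [left | move=> c0'; rewrite c0' in c0].
- by exists d; split; [right|].
Qed.

Lemma real_algebraic_int_poly x : real_algebraic x <->
  exists2 q : {poly int}, q != 0 & root (map_poly intr q) x.
Proof.
split=> [[cs [/Poly_int_of_Z_neq0 cs0 root_cs]]|[q q0 /rootP root_q]].
  by exists (Poly (map int_of_Z cs)) => //; apply/rootP; rewrite -zpoly_evalE.
exists (map Z_of_int q); split.
  by apply/Poly_int_of_Z_neq0; rewrite -map_comp (eq_map Z_of_intK) map_id polyseqK.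
by rewrite zpoly_evalE -map_comp (eq_map Z_of_intK) map_id polyseqK.
Qed.

Lemma algebraic_int_poly (R : numFieldType) (x : R) : algebraicOver (@ratr R) x <->
  exists2 q : {poly int}, q != 0 & root (map_poly intr q) x.
Proof.
have ratr_intr (q : {poly int}) : map_poly (@ratr R) (map_poly intr q) = map_poly intr q.
  by rewrite -map_poly_comp; apply: eq_map_poly => z /=; rewrite ratr_int.
split=> [[p p0 root_p]|[q q0 root_q]].
  have [q [a a0 Ep]] := rat_poly_scale p.
  exists q; first by apply: contra p0 => /eqP q0; rewrite Ep q0 map_poly0 scaler0.
  move: root_p; rewrite Ep linearZ /= ratr_intr rootZ //.
  by rewrite fmorph_eq0 invr_eq0 intr_eq0.
exists (map_poly intr q); last by rewrite ratr_intr.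
by rewrite map_poly_eq0_id0 ?intr_eq0 ?lead_coef_eq0.
Qed.

Lemma real_algebraicP x : real_algebraic x <-> algebraicOver (@ratr RR) x.
Proof. by rewrite real_algebraic_int_poly algebraic_int_poly. Qed.

(** * Specializing the parameters of finitely many sentences *)

(* A scalar [a] of a formula becomes the variable with index [index a rs], and the
   formula variable [n] becomes the variable with index [size rs + n]. *)
Fixpoint to_gterm (rs : seq RR) (t : Defs.term) : GRing.term RR :=
  match t with
  | tvar n => GRing.Var _ (size rs + n)
  | tzero => GRing.NatConst _ 0
  | tone => GRing.NatConst _ 1
  | tadd u v => GRing.Add (to_gterm rs u) (to_gterm rs v)
  | tsub u v => GRing.Add (to_gterm rs u) (GRing.Opp (to_gterm rs v))
  | tmul u v => GRing.Mul (to_gterm rs u) (to_gterm rs v)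
  | tdiv u v => GRing.Mul (to_gterm rs u) (GRing.Inv (to_gterm rs v))
  | tscal a u => GRing.Mul (GRing.Var _ (index a rs)) (to_gterm rs u)
  end.

Fixpoint to_oformula (rs : seq RR) (p : Defs.formula) : ord.formula RR :=
  match p with
  | feq u v => ord.Equal (to_gterm rs u) (to_gterm rs v)
  | flt u v => ord.Lt (to_gterm rs u) (to_gterm rs v)
  | fbot => ord.Bool false
  | fimp p q => ord.Implies (to_oformula rs p) (to_oformula rs q)
  | fand p q => ord.And (to_oformula rs p) (to_oformula rs q)
  | for_ p q => ord.Or (to_oformula rs p) (to_oformula rs q)
  | fall n p => ord.Forall (size rs + n) (to_oformula rs p)
  | fex n p => ord.Exists (size rs + n) (to_oformula rs p)
  end.

Fixpoint tscalars (t : Defs.term) : seq RR :=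
  match t with
  | tvar _ | tzero | tone => [::]
  | tadd u v | tsub u v | tmul u v | tdiv u v => tscalars u ++ tscalars v
  | tscal a u => a :: tscalars u
  end.

Fixpoint scalars (p : Defs.formula) : seq RR :=
  match p with
  | feq u v | flt u v => tscalars u ++ tscalars v
  | fbot => [::]
  | fimp p q | fand p q | for_ p q => scalars p ++ scalars q
  | fall _ p | fex _ p => scalars p
  end.

Lemma to_oformula_over (P : RR -> Prop) rs p : oformula_over P (to_oformula rs p).
Proof.
have Ht t : gterm_over P (to_gterm rs t) by elim: t => //= *; split.
by elim: p => //= *; split.
Qed.

(* Both sides are [0] when [y = 0]. *)
Lemma rdiv0E (x y : RR) : rdiv0 x y = x / y.
Proof.
rewrite /rdiv0; case: RIneq.Req_dec_T => [->|]; last by [].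
by rewrite invr0 mulr0.
Qed.

Section Translation.
Variables (rs : seq RR) (g : RR -> RR).

Definition encodes (s : seq RR) (env : nat -> RR) :=
  (forall a, a \in rs -> s`_(index a rs) = g a) /\ (forall n, s`_(size rs + n) = env n).

Lemma encodes_set_nth s env n x :
  encodes s env -> encodes (set_nth 0 s (size rs + n) x) (upd env n x).
Proof.
move=> [Hg Henv]; split=> [a /[dup] ars /Hg <-|k].
  rewrite nth_set_nth /=; case: eqP => // Ei.
  by move: ars; rewrite -index_mem Ei ltnNge leq_addr.
rewrite nth_set_nth /= eqn_add2l /upd.
by case: PeanoNat.Nat.eqb_spec => [->|/eqP/negbTE ->]; rewrite ?eqxx.
Qed.

Lemma eval_to_gterm s env t : encodes s env -> {subset tscalars t <= rs} ->
  GRing.eval s (to_gterm rs t) = eval_t (reindex_scal Rstructure g) env t.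
Proof.
move=> [Hg Henv]; elim: t => /= [n|||u IHu v IHv|u IHu v IHv|u IHu v IHv|u IHu v IHv|a u IHu].
- by rewrite Henv.
1,2: by [].
1-4: by move=> /cat_subset [/IHu -> /IHv ->]; rewrite ?rdiv0E.
by move=> Hsub; rewrite Hg ?IHu ?Hsub ?inE ?eqxx // => b Hb; apply: Hsub; rewrite inE Hb orbT.
Qed.

Lemma holds_to_oformula p s env : encodes s env -> {subset scalars p <= rs} ->
  ord.holds s (to_oformula rs p) <-> holds (reindex_scal Rstructure g) env p.
Proof.
elim: p s env => /= [u v|u v||p IHp q IHq|p IHp q IHq|p IHp q IHq|n p IHp|n p IHp] s env Hs.
- by move=> /cat_subset [Hu Hv]; rewrite (eval_to_gterm Hs Hu) (eval_to_gterm Hs Hv).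
- move=> /cat_subset [Hu Hv].
  by rewrite (eval_to_gterm Hs Hu) (eval_to_gterm Hs Hv); split=> /RltP.
- by [].
1-3: by move=> /cat_subset [Hp Hq]; rewrite (IHp _ _ Hs Hp) (IHq _ _ Hs Hq).
- by move=> Hp; split=> H x; apply/(IHp _ _ (encodes_set_nth n x Hs) Hp).
- by move=> Hp; split=> -[x H]; exists x; apply/(IHp _ _ (encodes_set_nth n x Hs) Hp).
Qed.

End Translation.

Local Notation alg := (algebraicOver (@ratr RR)).

Definition conj_oformula (rs : seq RR) (qs : seq Defs.formula) : ord.formula RR :=
  foldr (fun q f => ord.And (to_oformula rs q) f) (ord.Bool true) qs.

Lemma holds_conj_oformula rs (s : seq RR) qs :
  ord.holds s (conj_oformula rs qs) <-> allp (fun q => ord.holds s (to_oformula rs q)) qs.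
Proof. by elim: qs => [|q qs IH] //=; rewrite IH. Qed.

Lemma conj_oformula_over (P : RR -> Prop) rs qs : oformula_over P (conj_oformula rs qs).
Proof. by elim: qs => //= q qs IH; split => //; apply: to_oformula_over. Qed.

Lemma finite_specialization (qs : seq Defs.formula) :
  allp (fun q => sentence q /\ sat Rstructure q) qs ->
  exists g : RR -> RR, [/\ forall r, alg (g r), forall r, alg r -> g r = r
    & allp (fun q => sat Rstructure (fmap_scal g q)) qs].
Proof.
move=> Hqs; pose rs := flatten (map scalars qs).
have Hsub : allp (fun q => {subset scalars q <= rs}) qs.
  rewrite /rs; elim: (qs) => [|q qs' IH] //=; split=> [a Ha|]; first by rewrite mem_cat Ha.
  by apply: sub_allp IH => r Hr a /Hr; rewrite mem_cat orbC => ->.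
have Hrs : ord.holds rs (conj_oformula rs qs).
  apply/holds_conj_oformula; apply: sub_allp (allp_and Hqs Hsub) => q [[_ Hq] Hsubq].
  apply/(holds_to_oformula (g := id) (env := fun _ => 0) _ Hsubq); last exact: Hq.
  by split=> [a /(nth_index 0) //|n]; rewrite nth_default // leq_addr.
have [s' [alg_s' Es' Hs']] := algebraic_specialization (conj_oformula_over _ rs qs) Hrs.
pose g a := if a \in rs then s'`_(index a rs) else if pselect (alg a) then a else 0.
exists g; split.
- move=> r; rewrite /g; case: ifP => _; first exact: alg_s'.
  by case: pselect => //= _; exact: algebraic0.
- move=> r ar; rewrite /g; case: ifPn => [Hr|_]; last by case: pselect.
  by rewrite Es' nth_index // ?(nth_index 0 Hr).
apply: sub_allp (allp_and (iffLR (holds_conj_oformula _ _ _) Hs') (allp_and Hqs Hsub)).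
move=> q [Hq [[Hsent _] Hsubq]] e; pose env n := s'`_(size rs + n).
apply: (@sentence_holds Rstructure _ env _ (sentence_fmap_scal Hsent)).
apply/holds_reindex; apply/(holds_to_oformula (env := env) _ Hsubq).
  by split=> // a Ha; rewrite /g Ha.
exact: Hq.
Qed.

Definition specialization := {g : RR -> RR |
  (forall r, real_algebraic (g r)) /\ (forall r, real_algebraic r -> g r = r)}.

Definition specializes_true (qs : seq Defs.formula) : set specialization :=
  fun g => allp (fun q => T all_reals q -> sat Rstructure (fmap_scal (sval g) q)) qs.

Lemma specializes_true_neq0 qs : (specializes_true qs !=set0)%classic.
Proof.
have [|g [alg_g fix_g Hg]] :=
    finite_specialization (qs := [seq q <- qs | `[< T all_reals q >]]).
  by apply/allp_filter/allpP => q _ /asboolP [] [? [_ ?]].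
have Hspec : (forall r, real_algebraic (g r)) /\ (forall r, real_algebraic r -> g r = r).
  by split=> r; [apply/real_algebraicP | move/real_algebraicP; apply: fix_g].
exists (exist _ g Hspec); move/allp_filter: Hg; apply: sub_allp => q Hq Tq.
by apply/Hq/asboolP.
Qed.

Lemma specializes_true_ultrafilter : exists U : set_system specialization,
  UltraFilter U /\ forall qs, U (specializes_true qs).
Proof.
have Hfilter : Filter (filter_from setT specializes_true).
  apply: filter_fromT_filter; first by exists [::].
  by move=> qs qs'; exists (qs ++ qs') => g /allp_cat [].
have [|U [U_ultra HU]] := ultraFilterLemma (F := filter_from setT specializes_true).
  by apply: filter_from_proper => // qs _; apply: specializes_true_neq0.
by exists U; split=> // qs; apply: HU; exists qs.
Qed.

Lemma reindex_sat_T (M : structure) (g : specialization) q :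
  (forall q, T real_algebraic q -> sat M q) ->
  T all_reals q -> sat Rstructure (fmap_scal (sval g) q) -> sat (reindex_scal M (sval g)) q.
Proof.
case: g => g [alg_g _] /= HM Tq Hq e; apply/holds_reindex; apply: HM.
have Hs : sentence (fmap_scal g q) by case: Tq => -[/sentence_fmap_scal].
have Hlang ad mu :
    formula_in all_reals ad mu q -> formula_in real_algebraic ad mu (fmap_scal g q).
  exact: formula_in_fmap_scal.
by case: Tq => -[_ [/Hlang HL _]]; [left|right].
Qed.

Theorem theorem4p4 :
  forall p : Defs.formula,
    sentence p -> L_full real_algebraic p ->
    entails (T all_reals) p -> entails (T real_algebraic) p.
Proof.
move=> p p_sent p_lang p_true M M_TA e.
have [U [U_ultra U_spec]] := specializes_true_ultrafilter.
pose UM := ultraproduct U (fun g => reindex_scal M (sval g)).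
have UM_TR q : T all_reals q -> sat UM q.
  move=> Tq E; apply/(los U_ultra); apply: filterS (U_spec [:: q]) => g [Hg _].
  exact: reindex_sat_T M_TA Tq (Hg Tq) _.
have /(los U_ultra) /filter_ex [g /=] := p_true _ UM_TR (fun _ => ucls U (fun g => s_zero M)).
have [_ fix_g] := svalP g; move/holds_reindex; rewrite (fmap_scal_id_in fix_g p_lang).
exact: sentence_holds.
Qed.
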